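(* Let $A$ be a unital $C^*$-algebra and let $p,q\in A$ be properly infinite, full projections with $p\sim q$ (Murray–von Neumann equivalent). Suppose there is a properly infinite, full projection $r\in A$ with $pr=0$ and $qr=0$. Then $p\sim_h q$, i.e. $p$ and $q$ are connected by a norm-continuous path of projections in $A$ (equivalently $q=upu^*$ for some $u\in\mathcal U^0(A)$).
   Context: A projection $p$ is properly infinite if there are mutually orthogonal subprojections $e,f\le p$ with $e\sim p\sim f$. A projection is full if it is not contained in any proper closed two-sided ideal. $\mathcal U^0(A)$ denotes the connected component of the identity in the unitary group of $A$. *)

From Stdlib Require Import Reals Lra.
Open Scope R_scope.

Record Cplx := mkC { Re : R; Im : R }.
Definition Cadd (a b : Cplx) : Cplx := mkC (Re a + Re b) (Im a + Im b).
Definition Cmul (a b : Cplx) : Cplx :=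
  mkC (Re a * Re b - Im a * Im b) (Re a * Im b + Im a * Re b).
Definition Cconj (a : Cplx) : Cplx := mkC (Re a) (- Im a).
Definition Cmod (a : Cplx) : R := sqrt (Re a * Re a + Im a * Im a).
Definition C1 : Cplx := mkC 1 0.

Record CStarAlg := {
  car :> Type;
  zero : car; one : car;
  add : car -> car -> car; opp : car -> car; mul : car -> car -> car;
  smul : Cplx -> car -> car; star : car -> car; norm : car -> R;
  addA : forall x y z, add x (add y z) = add (add x y) z;
  addC : forall x y, add x y = add y x;
  add0 : forall x, add zero x = x;
  addN : forall x, add (opp x) x = zero;
  mulA : forall x y z, mul x (mul y z) = mul (mul x y) z;
  mul1l : forall x, mul one x = x;
  mul1r : forall x, mul x one = x;
  mulDl : forall x y z, mul (add x y) z = add (mul x z) (mul y z);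
  mulDr : forall x y z, mul x (add y z) = add (mul x y) (mul x z);
  smulDr : forall a x y, smul a (add x y) = add (smul a x) (smul a y);
  smulDl : forall a b x, smul (Cadd a b) x = add (smul a x) (smul b x);
  smulA : forall a b x, smul (Cmul a b) x = smul a (smul b x);
  smul1 : forall x, smul C1 x = x;
  smul_mull : forall a x y, smul a (mul x y) = mul (smul a x) y;
  smul_mulr : forall a x y, smul a (mul x y) = mul x (smul a y);
  starK : forall x, star (star x) = x;
  starD : forall x y, star (add x y) = add (star x) (star y);
  starM : forall x y, star (mul x y) = mul (star y) (star x);
  starZ : forall a x, star (smul a x) = smul (Cconj a) (star x);
  norm_ge0 : forall x, 0 <= norm x;
  norm_eq0 : forall x, norm x = 0 -> x = zero;
  norm_triangle : forall x y, norm (add x y) <= norm x + norm y;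
  normZ : forall a x, norm (smul a x) = Cmod a * norm x;
  normM : forall x y, norm (mul x y) <= norm x * norm y;
  norm_cstar : forall x, norm (mul (star x) x) = norm x * norm x;
  complete : forall u : nat -> car,
    (forall eps, 0 < eps -> exists N, forall m n, (N <= m)%nat -> (N <= n)%nat ->
        norm (add (u m) (opp (u n))) < eps) ->
    exists l, forall eps, 0 < eps -> exists N, forall n, (N <= n)%nat ->
        norm (add (u n) (opp l)) < eps
}.

Arguments zero {c}. Arguments one {c}. Arguments add {c}. Arguments opp {c}.
Arguments mul {c}. Arguments smul {c}. Arguments star {c}. Arguments norm {c}.

Section Defs.
Variable A : CStarAlg.

Definition sub (x y : A) : A := add x (opp y).

Definition projection (p : A) : Prop := mul p p = p /\ star p = p.

Definition mvn (p q : A) : Prop :=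
  exists v : A, mul (star v) v = p /\ mul v (star v) = q.

(* e is a subprojection of p (for projections: e <= p iff e = e p) *)
Definition subproj (e p : A) : Prop := projection e /\ mul e p = e.

Definition properly_infinite (p : A) : Prop :=
  projection p /\
  exists e f : A, subproj e p /\ subproj f p /\ mul e f = zero /\
                  mvn e p /\ mvn p f.

Definition closed_ideal (I : A -> Prop) : Prop :=
  I zero /\
  (forall x y, I x -> I y -> I (add x y)) /\
  (forall a x, I x -> I (smul a x)) /\
  (forall a x, I x -> I (mul a x)) /\
  (forall a x, I x -> I (mul x a)) /\
  (forall (u : nat -> A) l, (forall n, I (u n)) ->
     (forall eps, 0 < eps -> exists N, forall n, (N <= n)%nat ->
        norm (sub (u n) l) < eps) -> I l).

Definition full (p : A) : Prop :=
  forall I, closed_ideal I -> I p -> forall x, I x.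

Definition homotopic_proj (p q : A) : Prop :=
  exists P : R -> A,
    (forall t, 0 <= t <= 1 -> projection (P t)) /\
    P 0 = p /\ P 1 = q /\
    (forall t, 0 <= t <= 1 -> forall eps, 0 < eps -> exists delta, 0 < delta /\
       forall s, 0 <= s <= 1 -> Rabs (s - t) < delta -> norm (sub (P s) (P t)) < eps).

End Defs.

(* Since r is full and properly infinite, the closure of A r A is a closed
      ideal (two isometries below r make it closed under addition) containing
      r, hence everything: p is within 1/2 of some a r b.
   2. Comparison (p is subequivalent to r): the segment W_t = (1-t) p + t r b p
      is uniformly bounded below on p A.  Walking along it in small steps, each
      step perturbs an isometry Y (Y^* Y = p) by a small E, and Y + E is
      corrected back to an isometry by an inverse square root of (Y+E)^*(Y+E)
      in the corner p A p, obtained from a convergent Newton-type iteration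
      (completeness of A).  At t = 1 this yields w with
      w^* w = p and r w = w.
   3. For orthogonal projections P, E and s with s^* s = P, s s^* = E, the
      "rotation" R_t = (1-t) P + sqrt(t(1-t)) (s + s^* ) + t E is a continuous
      path of projections from P to E.
   4. With e = w w^* (below r, so orthogonal to p and q), rotate p to e along w
      and e to q along v w^*, and concatenate the two paths. *)
From Stdlib Require Import Reals Lra Lia List.
Open Scope R_scope.

Arguments addA {c}. Arguments addC {c}. Arguments add0 {c}. Arguments addN {c}.
Arguments mulA {c}. Arguments mul1l {c}. Arguments mul1r {c}.
Arguments mulDl {c}. Arguments mulDr {c}.
Arguments smulDr {c}. Arguments smulDl {c}. Arguments smulA {c}. Arguments smul1 {c}.
Arguments smul_mull {c}. Arguments smul_mulr {c}.
Arguments starK {c}. Arguments starD {c}. Arguments starM {c}. Arguments starZ {c}.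
Arguments norm_ge0 {c}. Arguments norm_eq0 {c}. Arguments norm_triangle {c}.
Arguments normZ {c}. Arguments normM {c}. Arguments norm_cstar {c}.
Arguments complete {c}.

Local Notation "x +' y" := (add x y) (at level 50, left associativity).
Local Notation "x *' y" := (mul x y) (at level 40, left associativity).
Local Notation "-' x" := (opp x) (at level 35, x at level 35).
Local Notation "x -' y" := (sub _ x y) (at level 50, left associativity).
Local Notation "x ^*" := (star x) (at level 30).
Local Notation "0'" := (zero) (at level 0).

Definition rs (a : R) : Cplx := mkC a 0.
Local Notation "a .* x" := (smul (rs a) x) (at level 40).

Section Algebra.
Context {A : CStarAlg}.
Implicit Types x y z : A.

Lemma add0r x : x +' 0' = x.
Proof. rewrite addC; apply add0. Qed.
Lemma addNr x : x +' -' x = 0'.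
Proof. rewrite addC; apply addN. Qed.
Lemma addKl x y : -' x +' (x +' y) = y.
Proof. rewrite addA, addN; apply add0. Qed.
Lemma add_cancel_l x y z : x +' y = x +' z -> y = z.
Proof. intro H. rewrite <- (addKl x y), H. apply addKl. Qed.
Lemma mul0r x : 0' *' x = 0'.
Proof. apply (add_cancel_l (0' *' x)). rewrite <- mulDl, add0, add0r. reflexivity. Qed.
Lemma mulr0 x : x *' 0' = 0'.
Proof. apply (add_cancel_l (x *' 0')). rewrite <- mulDr, add0, add0r. reflexivity. Qed.
Lemma opp0 : -' 0' = (0' : A).
Proof. apply (add_cancel_l 0'). rewrite addNr, add0. reflexivity. Qed.
Lemma oppD x y : -' (x +' y) = -' x +' -' y.
Proof.
  apply (add_cancel_l (x +' y)). rewrite addNr.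
  rewrite <- addA, (addC y), <- addA, addN, add0r, addNr. reflexivity.
Qed.
Lemma oppK x : -' -' x = x.
Proof. apply (add_cancel_l (-' x)). rewrite addN, addNr. reflexivity. Qed.
Lemma mulNl x y : (-' x) *' y = -' (x *' y).
Proof. apply (add_cancel_l (x *' y)). rewrite addNr, <- mulDl, addNr, mul0r. reflexivity. Qed.
Lemma mulNr x y : x *' (-' y) = -' (x *' y).
Proof. apply (add_cancel_l (x *' y)). rewrite addNr, <- mulDr, addNr, mulr0. reflexivity. Qed.
Lemma star0 : (0' : A)^* = 0'.
Proof. apply (add_cancel_l (0'^*)). rewrite <- starD, add0, add0r. reflexivity. Qed.
Lemma starN x : (-' x)^* = -' (x^*).
Proof. apply (add_cancel_l (x^*)). rewrite addNr, <- starD, addNr, star0. reflexivity. Qed.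
Lemma sub_eq0 x y : x -' y = 0' -> x = y.
Proof. unfold sub. intro H. apply (add_cancel_l (-' y)). rewrite addN, addC. exact H. Qed.
Lemma subrr x : x -' x = 0'.
Proof. apply addNr. Qed.
Lemma sub0r x : x -' 0' = x.
Proof. unfold sub. rewrite opp0. apply add0r. Qed.
Lemma mul_subl x y z : (x -' y) *' z = x *' z -' y *' z.
Proof. unfold sub. rewrite mulDl, mulNl. reflexivity. Qed.
Lemma mul_subr x y z : z *' (x -' y) = z *' x -' z *' y.
Proof. unfold sub. rewrite mulDr, mulNr. reflexivity. Qed.
Lemma star_sub x y : (x -' y)^* = x^* -' y^*.
Proof. unfold sub. rewrite starD, starN. reflexivity. Qed.
Lemma sub_add x y u w : (x +' y) -' (u +' w) = (x -' u) +' (y -' w).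
Proof.
  unfold sub. rewrite oppD, <- !addA. f_equal. rewrite !addA. f_equal. apply addC.
Qed.

Lemma smulc0 c : smul c (0' : A) = 0'.
Proof. apply (add_cancel_l (smul c 0')). rewrite <- smulDr, add0, add0r. reflexivity. Qed.
Lemma smul_plus a b x : a .* x +' b .* x = (a + b) .* x.
Proof.
  rewrite <- smulDl. f_equal. unfold Cadd, rs; simpl; f_equal; ring.
Qed.
Lemma smul_smul a b x : a .* (b .* x) = (a * b) .* x.
Proof. rewrite <- smulA. f_equal. unfold Cmul, rs; simpl; f_equal; ring. Qed.
Lemma smul_1 x : 1 .* x = x.
Proof. exact (smul1 x). Qed.
Lemma smul_0 x : 0 .* x = 0'.
Proof.
  apply (add_cancel_l (0 .* x)). rewrite smul_plus, add0r. f_equal. f_equal. ring.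
Qed.
Lemma smul_N1 x : (-1) .* x = -' x.
Proof.
  apply (add_cancel_l x). rewrite addNr. rewrite <- (smul_1 x) at 1.
  rewrite smul_plus. replace (1 + -1) with 0 by ring. apply smul_0.
Qed.
Lemma smulN c x : smul c (-' x) = -' (smul c x).
Proof. apply (add_cancel_l (smul c x)). rewrite <- smulDr, !addNr, smulc0. reflexivity. Qed.
Lemma smul_sub c x y : smul c (x -' y) = smul c x -' smul c y.
Proof. unfold sub. rewrite smulDr, smulN. reflexivity. Qed.
Lemma mul_smull a x y : (a .* x) *' y = a .* (x *' y).
Proof. symmetry; apply smul_mull. Qed.
Lemma mul_smulr a x y : x *' (a .* y) = a .* (x *' y).
Proof. symmetry; apply smul_mulr. Qed.
Lemma star_smul a x : (a .* x)^* = a .* (x^*).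
Proof. rewrite starZ. f_equal. unfold Cconj, rs; simpl; f_equal; ring. Qed.

Lemma norm_smul a x : norm (a .* x) = Rabs a * norm x.
Proof.
  rewrite normZ. f_equal. unfold Cmod, rs; simpl.
  rewrite Rmult_0_l, Rplus_0_r. apply sqrt_Rsqr_abs.
Qed.
Lemma norm0 : norm (0' : A) = 0.
Proof. rewrite <- (smul_0 0'), norm_smul, Rabs_R0. ring. Qed.
Lemma norm_opp x : norm (-' x) = norm x.
Proof. rewrite <- smul_N1, norm_smul, Rabs_left by lra. ring. Qed.
Lemma norm_sub_sym x y : norm (x -' y) = norm (y -' x).
Proof. unfold sub. rewrite <- norm_opp, oppD, oppK, addC. reflexivity. Qed.
Lemma norm_sub_le x y z : norm (x -' z) <= norm (x -' y) + norm (y -' z).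
Proof.
  replace (x -' z) with ((x -' y) +' (y -' z)). apply norm_triangle.
  unfold sub. rewrite <- addA, (addA (-' y)), addN, add0. reflexivity.
Qed.
Lemma norm_sub_add x y u w : norm ((x +' y) -' (u +' w)) <= norm (x -' u) + norm (y -' w).
Proof. rewrite sub_add. apply norm_triangle. Qed.
Lemma norm3 x y z : norm (x *' y *' z) <= norm x * norm y * norm z.
Proof.
  eapply Rle_trans. apply normM. apply Rmult_le_compat_r. apply norm_ge0. apply normM.
Qed.
(* The C*-identity forces the involution to be isometric. *)
Lemma norm_star x : norm (x^*) = norm x.
Proof.
  assert (Hle : forall y : A, norm y <= norm (y^*)).
  { intro y. destruct (Req_dec (norm y) 0) as [H|H].
    - rewrite H. apply norm_ge0.
    - pose proof (norm_cstar y) as E. pose proof (normM (y^*) y) as M.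
      rewrite E in M. pose proof (norm_ge0 y).
      apply Rmult_le_reg_r with (norm y); lra. }
  apply Rle_antisym; [rewrite <- (starK x) at 2|]; apply Hle.
Qed.
Lemma norm_small_eq x y : (forall eps, 0 < eps -> norm (x -' y) < eps) -> x = y.
Proof.
  intro H. apply sub_eq0, norm_eq0. pose proof (norm_ge0 (x -' y)).
  destruct (Req_dec (norm (x -' y)) 0) as [E|E]; auto.
  specialize (H (norm (x -' y))). lra.
Qed.
Lemma cstar_zero x : x^* *' x = 0' -> x = 0'.
Proof.
  intro H. apply norm_eq0. pose proof (norm_cstar x) as E. rewrite H, norm0 in E.
  pose proof (norm_ge0 x). nra.
Qed.

Lemma proj_norm e : projection A e -> norm e <= 1.
Proof.
  intros [H1 H2]. pose proof (norm_cstar e) as E. rewrite H2, H1 in E.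
  pose proof (norm_ge0 e). nra.
Qed.
Lemma pi_norm p v : projection A p -> v^* *' v = p -> norm v <= 1.
Proof.
  intros Pp H. pose proof (norm_cstar v) as E. rewrite H in E.
  pose proof (proj_norm p Pp). pose proof (norm_ge0 v). nra.
Qed.
Lemma pi_right v e : projection A e -> v^* *' v = e -> v *' e = v.
Proof.
  intros [P1 P2] H. symmetry. apply sub_eq0. apply cstar_zero.
  assert (H': forall x, x *' v^* *' v = x *' e) by (intro; rewrite <- mulA, H; reflexivity).
  rewrite star_sub, starM, P2, mul_subl, !mul_subr, !mulA, H, !H', !P1.
  rewrite !subrr; try apply subrr; reflexivity.
Qed.
Lemma pi_left v f : projection A f -> v *' v^* = f -> f *' v = v.
Proof.
  intros P H. assert (E: (v^*) *' f = v^*).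
  { apply (pi_right (v^*) f P). rewrite starK. exact H. }
  destruct P as [_ P2]. rewrite <- (starK v) at 2. rewrite <- E, starM, P2, starK. reflexivity.
Qed.
Lemma star_fix_r x e : projection A e -> e *' x = x -> x^* *' e = x^*.
Proof. intros [_ He] H. rewrite <- He at 1. rewrite <- starM, H. reflexivity. Qed.
Lemma star_fix_l x e : projection A e -> x *' e = x -> e *' x^* = x^*.
Proof. intros [_ He] H. rewrite <- He at 1. rewrite <- starM, H. reflexivity. Qed.
Lemma star_zero x y : x *' y = 0' -> y^* *' x^* = 0'.
Proof. intro H. rewrite <- starM, H. apply star0. Qed.
Lemma proj_orth_sym e f : projection A e -> projection A f -> e *' f = 0' -> f *' e = 0'.
Proof.
  intros [_ He] [_ Hf] H. rewrite <- He, <- Hf. apply star_zero, H.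
Qed.
Lemma rel_assoc u v w : u *' v = w -> forall x : A, x *' u *' v = x *' w.
Proof. intros H x. rewrite <- mulA, H. reflexivity. Qed.
End Algebra.

(* A reflexive decision procedure for identities in the additive group of A
   with real scalars: both sides are reified into terms, normalised to
   coefficient lists over the atoms, and the coefficients compared by a real
   arithmetic tactic. *)
Section Normaliser.
Variable A : CStarAlg.

Inductive gterm := GAtom (n : nat) | GAdd (a b : gterm) | GOpp (a : gterm)
  | GSub (a b : gterm) | GZero | GSmul (c : R) (a : gterm).

Fixpoint geval (env : list A) (t : gterm) : A :=
  match t with
  | GAtom n => nth n env 0'
  | GAdd a b => geval env a +' geval env b
  | GOpp a => -' geval env a
  | GSub a b => geval env a -' geval env b
  | GZero => 0'
  | GSmul c a => c .* geval env a
  end.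

Fixpoint ladd (l1 l2 : list R) : list R :=
  match l1, l2 with
  | nil, _ => l2
  | _, nil => l1
  | c1 :: t1, c2 :: t2 => (c1 + c2) :: ladd t1 t2
  end.
Definition lscale (c : R) (l : list R) : list R := map (fun u : R => c * u) l.
Fixpoint lunit (n : nat) : list R :=
  match n with O => 1 :: nil | S m => 0 :: lunit m end.

Fixpoint gnf (t : gterm) : list R :=
  match t with
  | GAtom n => lunit n
  | GAdd a b => ladd (gnf a) (gnf b)
  | GOpp a => lscale (-1) (gnf a)
  | GSub a b => ladd (gnf a) (lscale (-1) (gnf b))
  | GZero => nil
  | GSmul c a => lscale c (gnf a)
  end.

Fixpoint evl (l : list R) (env : list A) : A :=
  match l, env with
  | c :: t, e :: es => c .* e +' evl t es
  | _, _ => 0'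
  end.

Lemma evl_add l1 l2 env : evl (ladd l1 l2) env = evl l1 env +' evl l2 env.
Proof.
  revert l2 env. induction l1 as [|c1 t1 IH]; intros l2 env.
  - simpl. destruct env; rewrite add0; reflexivity.
  - destruct l2 as [|c2 t2]; simpl.
    + destruct env; simpl; rewrite add0r; reflexivity.
    + destruct env as [|e es]; simpl. rewrite add0; reflexivity.
      rewrite IH, <- smul_plus, <- !addA. f_equal. rewrite !addA. f_equal. apply addC.
Qed.
Lemma evl_scale c l env : evl (lscale c l) env = c .* evl l env.
Proof.
  revert env. induction l as [|a t IH]; intro env; simpl.
  - destruct env; rewrite smulc0; reflexivity.
  - destruct env as [|e es]; simpl. rewrite smulc0; reflexivity.
    rewrite IH, smulDr, smul_smul. reflexivity.
Qed.
Lemma evl_unit n env : evl (lunit n) env = nth n env 0'.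
Proof.
  revert env. induction n as [|n IH]; intro env; destruct env as [|e es]; simpl;
    try reflexivity.
  - rewrite smul_1, add0r. reflexivity.
  - rewrite IH, smul_0, add0. reflexivity.
Qed.
Lemma gnf_sound env t : geval env t = evl (gnf t) env.
Proof.
  induction t; simpl.
  - symmetry; apply evl_unit.
  - rewrite evl_add, IHt1, IHt2. reflexivity.
  - rewrite evl_scale, IHt, smul_N1. reflexivity.
  - rewrite evl_add, evl_scale, IHt1, IHt2, smul_N1. reflexivity.
  - destruct env; reflexivity.
  - rewrite evl_scale, IHt. reflexivity.
Qed.

Fixpoint allz (l : list R) : Prop :=
  match l with nil => True | c :: t => c = 0 /\ allz t end.
Fixpoint eqpad (l1 l2 : list R) : Prop :=
  match l1 with
  | nil => allz l2
  | c1 :: t1 => match l2 with nil => allz l1 | c2 :: t2 => c1 = c2 /\ eqpad t1 t2 end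
  end.

Lemma evl_zero l env : allz l -> evl l env = 0'.
Proof.
  revert env; induction l as [|c t IH]; intros env H; simpl.
  - destruct env; reflexivity.
  - destruct env as [|e es]. reflexivity. destruct H as [H1 H2].
    rewrite H1, smul_0, IH; auto. apply add0.
Qed.
Lemma evl_eqpad l1 l2 env : eqpad l1 l2 -> evl l1 env = evl l2 env.
Proof.
  revert l2 env. induction l1 as [|c1 t1 IH]; intros l2 env H.
  - simpl in H. rewrite (evl_zero l2 env H). destruct env; reflexivity.
  - destruct l2 as [|c2 t2].
    + rewrite (evl_zero (c1 :: t1) env H). destruct env; reflexivity.
    + destruct H as [H1 H2]. destruct env as [|e es]; simpl. reflexivity.
      rewrite H1, (IH t2 es H2). reflexivity.
Qed.
Lemma gterm_eq env t1 t2 : eqpad (gnf t1) (gnf t2) -> geval env t1 = geval env t2.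
Proof. intro H. rewrite !gnf_sound. apply evl_eqpad. exact H. Qed.
End Normaliser.

Ltac lookup x l :=
  match l with
  | cons x _ => constr:(O)
  | cons _ ?t => let n := lookup x t in constr:(S n)
  end.

Ltac reify_atom x env :=
  match constr:(tt) with
  | _ => let n := lookup x env in constr:((GAtom n, env))
  | _ => let n := eval compute in (length env) in
         let env' := eval cbv [app] in (app env (cons x nil)) in
         constr:((GAtom n, env'))
  end.

Ltac reify e env :=
  match e with
  | @add _ ?a ?b =>
      match reify a env with (?t1, ?e1) =>
      match reify b e1 with (?t2, ?e2) => constr:((GAdd t1 t2, e2)) end end
  | sub _ ?a ?b =>
      match reify a env with (?t1, ?e1) =>
      match reify b e1 with (?t2, ?e2) => constr:((GSub t1 t2, e2)) end end
  | @opp _ ?a =>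
      match reify a env with (?t1, ?e1) => constr:((GOpp t1, e1)) end
  | @zero _ => constr:((GZero, env))
  | @smul _ (rs ?c) ?a =>
      match reify a env with (?t1, ?e1) => constr:((GSmul c t1, e1)) end
  | _ => reify_atom e env
  end.

Ltac agroup_with tac :=
  match goal with
  | |- @eq (car ?A) ?L ?R =>
      match reify L (@nil (car A)) with (?tL, ?e1) =>
      match reify R e1 with (?tR, ?e2) =>
        change (geval A e2 tL = geval A e2 tR);
        apply gterm_eq; cbn [gnf ladd lscale lunit map eqpad allz];
        repeat split; tac
      end end
  end.
Ltac agroup := agroup_with ltac:(first [ring | field | lra]).

Ltac mexpand := repeat progress (rewrite ?mulDl, ?mulDr, ?mul_subl, ?mul_subr,
  ?mul_smull, ?mul_smulr, ?mulNl, ?mulNr, ?mul0r, ?mulr0, ?mulA).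
Ltac sexpand := repeat progress (rewrite ?starD, ?starM, ?star_sub, ?starN,
  ?star_smul, ?starK, ?star0).

Lemma absorb_factor K eps : 0 <= K -> 0 < eps -> exists delta, 0 < delta /\ K * delta < eps.
Proof.
  intros HK He. exists (eps / (K + 1)). split.
  - apply Rdiv_lt_0_compat; lra.
  - apply Rlt_le_trans with ((K + 1) * (eps / (K + 1))).
    + apply Rmult_lt_compat_r; [apply Rdiv_lt_0_compat|]; lra.
    + right. field. lra.
Qed.

Section Ideal.
Variables (A : CStarAlg) (r : A).
Hypothesis Hr : properly_infinite A r.

Lemma two_isometries : exists s1 s2 : A, s1^* *' s1 = r /\ s2^* *' s2 = r /\
  s1^* *' s2 = 0' /\ r *' s1 = s1 /\ r *' s2 = s2.
Proof.
  destruct Hr as [Pr [e [f [[Pe Her] [[Pf Hfr] [Hef [[v [Hv1 Hv2]] [u [Hu1 Hu2]]]]]]]]].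
  exists (v^*), u.
  assert (Hve : v *' e = v) by (apply pi_right; auto).
  assert (Hfu : f *' u = u) by (apply pi_left; auto).
  assert (Hrf : r *' f = f).
  { pose proof (star_fix_l f r Pr Hfr) as H. destruct Pf as [_ Hfs]. rewrite Hfs in H. exact H. }
  assert (Hvr : v *' r = v) by (rewrite <- Hve, <- mulA, Her; reflexivity).
  repeat split.
  - rewrite starK. exact Hv2.
  - exact Hu1.
  - rewrite starK, <- Hve, <- Hfu, <- mulA, (mulA e), Hef, mul0r, mulr0. reflexivity.
  - apply star_fix_l; auto.
  - rewrite <- Hfu, mulA, Hrf. reflexivity.
Qed.

Definition near_ArA (x : A) : Prop :=
  forall eps, 0 < eps -> exists a b, norm (x -' a *' r *' b) < eps.

(* Sums: a r b + a' r b' = (a s1^* + a' s2^* ) r (s1 b + s2 b'). *)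
Lemma near_ArA_add x y : near_ArA x -> near_ArA y -> near_ArA (x +' y).
Proof.
  destruct two_isometries as [s1 [s2 [H11 [H22 [H12 [Hr1 Hr2]]]]]].
  assert (Hs1r : s1^* *' r = s1^*) by (apply star_fix_r; [apply Hr|exact Hr1]).
  assert (Hs2r : s2^* *' r = s2^*) by (apply star_fix_r; [apply Hr|exact Hr2]).
  assert (H21 : s2^* *' s1 = 0') by (rewrite <- (starK s1); apply star_zero, H12).
  intros Hx Hy eps Heps.
  destruct (Hx (eps/2)) as [a [b Ha]]; [lra|].
  destruct (Hy (eps/2)) as [a' [b' Ha']]; [lra|].
  exists (a *' s1^* +' a' *' s2^*), (s1 *' b +' s2 *' b').
  replace ((a *' s1^* +' a' *' s2^*) *' r *' (s1 *' b +' s2 *' b'))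
    with (a *' r *' b +' a' *' r *' b').
  - pose proof (norm_sub_add x y (a *' r *' b) (a' *' r *' b')). lra.
  - rewrite <- !mulA, (mulDr r), !(mulA r), Hr1, Hr2, !mulDl, !mulDr, <- !mulA,
      !(mulA (s1^*)), !(mulA (s2^*)), H11, H12, H21, H22, !mul0r, !mulr0, add0r, add0.
    reflexivity.
Qed.

Lemma near_ArA_smul c x : near_ArA x -> near_ArA (smul c x).
Proof.
  intros Hx eps Heps.
  destruct (absorb_factor (Cmod c) eps) as [d [Hd Hcd]]; [apply sqrt_pos|auto|].
  destruct (Hx d Hd) as [a [b Hab]]. exists (smul c a), b.
  rewrite <- !smul_mull, <- smul_sub, normZ.
  eapply Rle_lt_trans; [|exact Hcd]. apply Rmult_le_compat_l; [apply sqrt_pos|lra].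
Qed.

Lemma near_ArA_mull c x : near_ArA x -> near_ArA (c *' x).
Proof.
  intros Hx eps Heps.
  destruct (absorb_factor (norm c) eps) as [d [Hd Hcd]]; [apply norm_ge0|auto|].
  destruct (Hx d Hd) as [a [b Hab]]. exists (c *' a), b.
  replace (c *' a *' r *' b) with (c *' (a *' r *' b)) by (rewrite !mulA; reflexivity).
  rewrite <- mul_subr.
  eapply Rle_lt_trans; [apply normM|]. eapply Rle_lt_trans; [|exact Hcd].
  apply Rmult_le_compat_l; [apply norm_ge0|lra].
Qed.

Lemma near_ArA_mulr c x : near_ArA x -> near_ArA (x *' c).
Proof.
  intros Hx eps Heps.
  destruct (absorb_factor (norm c) eps) as [d [Hd Hcd]]; [apply norm_ge0|auto|].
  destruct (Hx d Hd) as [a [b Hab]]. exists a, (b *' c).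
  rewrite mulA, <- mul_subl.
  eapply Rle_lt_trans; [apply normM|]. rewrite Rmult_comm.
  eapply Rle_lt_trans; [|exact Hcd]. apply Rmult_le_compat_l; [apply norm_ge0|lra].
Qed.

Lemma near_ArA_closed (u : nat -> A) l : (forall n, near_ArA (u n)) ->
  (forall eps, 0 < eps -> exists N, forall n, (N <= n)%nat -> norm (u n -' l) < eps) ->
  near_ArA l.
Proof.
  intros Hu Hl eps Heps.
  destruct (Hl (eps/2)) as [N HN]; [lra|].
  destruct (Hu N (eps/2)) as [a [b Hab]]; [lra|].
  exists a, b. specialize (HN N (le_n N)). rewrite norm_sub_sym in HN.
  pose proof (norm_sub_le l (u N) (a *' r *' b)). lra.
Qed.

Lemma near_ArA_ideal : closed_ideal A near_ArA.
Proof.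
  repeat split.
  - intros eps Heps. exists 0', 0'. rewrite mulr0, sub0r, norm0. exact Heps.
  - apply near_ArA_add.
  - apply near_ArA_smul.
  - apply near_ArA_mull.
  - apply near_ArA_mulr.
  - apply near_ArA_closed.
Qed.

Lemma full_approx x : full A r -> near_ArA x.
Proof.
  intro Hf. apply (Hf near_ArA near_ArA_ideal).
  intros eps Heps. exists one, one. rewrite mul1l, mul1r, subrr, norm0. exact Heps.
Qed.
End Ideal.

Section Convergence.
Context {A : CStarAlg}.
Implicit Types (u : nat -> A) (l : A).

Definition converges u l : Prop :=
  forall eps, 0 < eps -> exists N, forall n, (N <= n)%nat -> norm (u n -' l) < eps.

Lemma half_pow_bounds n : 0 < (1/2)^n <= 1.
Proof. induction n as [|n IH]; simpl; lra. Qed.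
Lemma half_pow_le N n : (N <= n)%nat -> (1/2)^n <= (1/2)^N.
Proof.
  intro H. replace n with (N + (n - N))%nat by lia. generalize (n - N)%nat as d.
  induction d as [|d IH]. rewrite Nat.add_0_r. lra.
  rewrite Nat.add_succ_r. simpl. pose proof (half_pow_bounds (N + d)). lra.
Qed.
Lemma half_pow_small eps : 0 < eps -> exists N, (1/2)^N < eps.
Proof.
  intro H. destruct (pow_lt_1_zero (1/2)) with eps as [N HN]; auto.
  - rewrite Rabs_pos_eq; lra.
  - exists N. specialize (HN N (le_n N)). rewrite Rabs_pos_eq in HN; auto.
    pose proof (half_pow_bounds N). lra.
Qed.

Lemma geometric_converges u : (forall n, norm (u (S n) -' u n) <= (1/2)^(S n)) ->
  exists l, converges u l.
Proof.
  intro Hstep.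
  assert (Htail : forall n d, norm (u (n + d)%nat -' u n) <= (1/2)^n - (1/2)^(n + d)).
  { intros n d. induction d as [|d IH].
    - rewrite Nat.add_0_r, subrr, norm0. lra.
    - rewrite Nat.add_succ_r. eapply Rle_trans. apply (norm_sub_le _ (u (n + d)%nat)).
      pose proof (Hstep (n + d)%nat). simpl ((1/2)^(S (n + d))) in *. lra. }
  assert (Hle : forall n m, (n <= m)%nat -> norm (u m -' u n) <= (1/2)^n).
  { intros n m H. replace m with (n + (m - n))%nat by lia.
    pose proof (Htail n (m - n)%nat). pose proof (half_pow_bounds (n + (m - n))). lra. }
  apply complete. intros eps Heps. destruct (half_pow_small eps Heps) as [N HN].
  exists N. intros m n Hm Hn. fold (sub A (u m) (u n)).
  destruct (Nat.le_ge_cases n m) as [Hnm|Hnm].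
  - pose proof (Hle n m Hnm). pose proof (half_pow_le N n Hn). lra.
  - rewrite norm_sub_sym. pose proof (Hle m n Hnm). pose proof (half_pow_le N m Hm). lra.
Qed.

Lemma converges_geometric u l : (forall n, norm (u n -' l) <= (1/2)^n) -> converges u l.
Proof.
  intros H eps Heps. destruct (half_pow_small eps Heps) as [N HN]. exists N.
  intros n Hn. pose proof (H n). pose proof (half_pow_le N n Hn). lra.
Qed.

Lemma converges_unique u l1 l2 : converges u l1 -> converges u l2 -> l1 = l2.
Proof.
  intros H1 H2. apply norm_small_eq. intros eps Heps.
  destruct (H1 (eps/2)) as [N1 HN1]; [lra|]. destruct (H2 (eps/2)) as [N2 HN2]; [lra|].
  specialize (HN1 (N1 + N2)%nat ltac:(lia)). specialize (HN2 (N1 + N2)%nat ltac:(lia)).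
  rewrite norm_sub_sym in HN1. pose proof (norm_sub_le l1 (u (N1 + N2)%nat) l2). lra.
Qed.

Lemma limit_fix_l a u l : (forall n, a *' u n = u n) -> converges u l -> a *' l = l.
Proof.
  intros Hfix Hl. apply (converges_unique u); auto. intros eps Heps.
  destruct (absorb_factor (norm a) eps) as [d [Hd Had]]; [apply norm_ge0|auto|].
  destruct (Hl d Hd) as [N HN]. exists N. intros n Hn.
  rewrite <- Hfix, <- mul_subr. eapply Rle_lt_trans; [apply normM|].
  eapply Rle_lt_trans; [|exact Had]. apply Rmult_le_compat_l; [apply norm_ge0|].
  left. apply HN, Hn.
Qed.
Lemma limit_fix_r a u l : (forall n, u n *' a = u n) -> converges u l -> l *' a = l.
Proof.
  intros Hfix Hl. apply (converges_unique u); auto. intros eps Heps.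
  destruct (absorb_factor (norm a) eps) as [d [Hd Had]]; [apply norm_ge0|auto|].
  destruct (Hl d Hd) as [N HN]. exists N. intros n Hn.
  rewrite <- Hfix, <- mul_subl. eapply Rle_lt_trans; [apply normM|].
  rewrite Rmult_comm. eapply Rle_lt_trans; [|exact Had].
  apply Rmult_le_compat_l; [apply norm_ge0|]. left. apply HN, Hn.
Qed.

Lemma converges_sandwich X u l :
  converges u l -> converges (fun n => (u n)^* *' X *' u n) (l^* *' X *' l).
Proof.
  intros Hl eps Heps.
  assert (HK : 0 <= norm X * (2 * norm l + 1))
    by (pose proof (norm_ge0 X); pose proof (norm_ge0 l); nra).
  destruct (absorb_factor _ eps HK Heps) as [d [Hd HKd]].
  destruct (Hl (Rmin d 1)) as [N HN]; [apply Rmin_glb_lt; lra|].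
  exists N. intros n Hn. specialize (HN n Hn).
  pose proof (Rmin_l d 1). pose proof (Rmin_r d 1).
  set (x := u n) in *. set (dx := x -' l) in *.
  replace (x^* *' X *' x -' l^* *' X *' l) with (dx^* *' X *' x +' l^* *' X *' dx)
    by (unfold dx; sexpand; mexpand; agroup).
  assert (Hx : norm x <= norm l + 1).
  { replace x with (dx +' l) by (unfold dx; agroup). pose proof (norm_triangle dx l). lra. }
  pose proof (norm3 (dx^*) X x) as N1. pose proof (norm3 (l^*) X dx) as N2.
  rewrite norm_star in N1, N2.
  pose proof (norm_ge0 dx). pose proof (norm_ge0 X). pose proof (norm_ge0 l).
  eapply Rle_lt_trans; [apply norm_triangle|]. eapply Rle_lt_trans; [|exact HKd].
  assert (norm dx * norm X * norm x <= norm dx * norm X * (norm l + 1))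
    by (apply Rmult_le_compat_l; nra).
  assert (norm dx * norm X * (2 * norm l + 1) <= d * (norm X * (2 * norm l + 1))) by nra.
  nra.
Qed.
End Convergence.

Definition in_corner {A : CStarAlg} (p x : A) : Prop := p *' x = x /\ x *' p = x.

(* For a self-adjoint k in p A p with
   norm k <= 1/4 we find m in p A p with m^* (p - k) m = p.  The iteration
   M_(n+1) = M_n (p + k_n/2) keeps M_n^* (p - k) M_n = p - k_n, where
   k_(n+1) = 3/4 k_n^2 + 1/4 k_n^3, so k_n -> 0 quadratically. *)
Section SquareRoot.
Context {A : CStarAlg}.
Variables (p k0 : A).
Hypotheses (Pp : projection A p) (Hk0s : k0^* = k0) (Hk0c : in_corner p k0)
  (Hk0n : norm k0 <= 1/4).

Definition sq_corr (k : A) : A := p +' (1/2) .* k.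
Definition sq_next (k : A) : A := (3/4) .* (k *' k) +' (1/4) .* (k *' k *' k).

Fixpoint sqseq (n : nat) : A * A :=
  match n with
  | O => (p, k0)
  | S n => let (M, k) := sqseq n in (M *' sq_corr k, sq_next k)
  end.
Definition Ms n := fst (sqseq n).
Definition Ks n := snd (sqseq n).

Lemma sq_next_corner k : k^* = k -> in_corner p k ->
  (sq_next k)^* = sq_next k /\ in_corner p (sq_next k).
Proof.
  intros Hs [Hpk Hkp]. pose proof (rel_assoc _ _ _ Hpk) as Hpk'.
  pose proof (rel_assoc _ _ _ Hkp) as Hkp'. unfold sq_next.
  split; [|split]; [sexpand; rewrite Hs|..]; mexpand; rewrite ?Hpk', ?Hkp', ?Hpk, ?Hkp;
    reflexivity.
Qed.

Lemma sq_corr_sandwich k : k^* = k -> in_corner p k ->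
  (sq_corr k)^* *' (p -' k) *' sq_corr k = p -' sq_next k.
Proof.
  intros Hs [Hpk Hkp]. destruct Pp as [Hpp Hps].
  pose proof (rel_assoc _ _ _ Hpp) as Hpp'. pose proof (rel_assoc _ _ _ Hpk) as Hpk'.
  pose proof (rel_assoc _ _ _ Hkp) as Hkp'.
  unfold sq_corr, sq_next. sexpand. rewrite Hs, Hps.
  mexpand. rewrite ?Hpp', ?Hpk', ?Hkp', ?Hpp, ?Hpk, ?Hkp, ?smul_smul. agroup.
Qed.

Lemma sq_next_norm k u : 0 < u <= 1 -> norm k <= (1/4) * u ->
  norm (sq_next k) <= (1/4) * (u / 2).
Proof.
  intros Hu Hk. pose proof (norm_ge0 k).
  assert (N2 : norm (k *' k) <= norm k * norm k) by apply normM.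
  assert (N3 : norm (k *' k *' k) <= norm k * norm k * norm k) by apply norm3.
  pose proof (norm_ge0 (k *' k)). pose proof (norm_ge0 (k *' k *' k)).
  unfold sq_next. eapply Rle_trans; [apply norm_triangle|].
  rewrite !norm_smul, !Rabs_pos_eq by lra.
  assert (norm k * norm k <= (1/4) * u * ((1/4) * u)) by (apply Rmult_le_compat; lra).
  assert (norm k * norm k * norm k <= (1/4) * u * ((1/4) * u) * (1/4))
    by (apply Rmult_le_compat; nra).
  nra.
Qed.

Lemma sq_corr_norm M k u : 0 < u <= 1 -> norm M <= 2 - u -> norm k <= (1/4) * u ->
  norm (M *' sq_corr k) <= 2 - u / 2.
Proof.
  intros Hu HM Hk. eapply Rle_trans; [apply normM|].
  assert (Hc : norm (sq_corr k) <= 1 + (1/8) * u).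
  { unfold sq_corr. eapply Rle_trans; [apply norm_triangle|].
    rewrite norm_smul, Rabs_pos_eq by lra. pose proof (proj_norm p Pp). lra. }
  pose proof (norm_ge0 M). pose proof (norm_ge0 (sq_corr k)).
  apply Rle_trans with ((2 - u) * (1 + (1/8) * u)); [apply Rmult_le_compat; auto|nra].
Qed.

Lemma sqseq_inv n :
  (Ks n)^* = Ks n /\ in_corner p (Ks n) /\ norm (Ks n) <= (1/4) * (1/2)^n /\
  in_corner p (Ms n) /\ (Ms n)^* *' (p -' k0) *' Ms n = p -' Ks n /\
  norm (Ms n) <= 2 - (1/2)^n.
Proof.
  unfold Ms, Ks. induction n as [|n IH]; simpl.
  - destruct Pp as [Hpp Hps]. destruct Hk0c as [Hpk Hkp].
    repeat split; auto; try lra.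
    + rewrite Hps, mul_subr, mul_subl, Hpp, Hpk, Hpp, Hkp. reflexivity.
    + pose proof (proj_norm p Pp). lra.
  - destruct (sqseq n) as [M k]; simpl in IH |- *.
    destruct IH as [Hks [Hkc [Hkn [[HpM HMp] [HMM HMn]]]]].
    pose proof (half_pow_bounds n) as Hu.
    destruct (sq_next_corner k Hks Hkc) as [Hns [Hpn Hnp]].
    repeat split; auto.
    + replace ((1/2) * (1/2)^n) with ((1/2)^n / 2) by field.
      apply sq_next_norm; auto.
    + rewrite mulA, HpM. reflexivity.
    + unfold sq_corr. rewrite <- mulA, mulDl, (proj1 Pp), mul_smull, (proj2 Hkc).
      reflexivity.
    + rewrite starM, <- (sq_corr_sandwich k Hks Hkc), <- HMM, !mulA. reflexivity.
    + replace ((1/2) * (1/2)^n) with ((1/2)^n / 2) by field.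
      apply sq_corr_norm; auto.
Qed.

Lemma Ms_step n : norm (Ms (S n) -' Ms n) <= (1/2)^(S n).
Proof.
  destruct (sqseq_inv n) as [_ [_ [Hkn [[_ HMp] [_ HMn]]]]].
  pose proof (half_pow_bounds n).
  assert (E : Ms (S n) = Ms n *' sq_corr (Ks n)).
  { unfold Ms, Ks. simpl. destruct (sqseq n). reflexivity. }
  rewrite E. unfold sq_corr. rewrite mulDr, HMp, mul_smulr.
  replace (Ms n +' (1/2) .* (Ms n *' Ks n) -' Ms n) with ((1/2) .* (Ms n *' Ks n)) by agroup.
  rewrite norm_smul, Rabs_pos_eq by lra.
  pose proof (normM (Ms n) (Ks n)). pose proof (norm_ge0 (Ms n)). pose proof (norm_ge0 (Ks n)).
  assert (norm (Ms n) * norm (Ks n) <= 2 * ((1/4) * (1/2)^n)) by (apply Rmult_le_compat; lra).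
  simpl. lra.
Qed.

Lemma corner_inverse_sqrt : exists m, in_corner p m /\ m^* *' (p -' k0) *' m = p.
Proof.
  destruct (geometric_converges Ms Ms_step) as [l Hl].
  exists l. split; [split|].
  - apply (limit_fix_l p Ms); auto. intro n. apply (sqseq_inv n).
  - apply (limit_fix_r p Ms); auto. intro n. apply (sqseq_inv n).
  - apply (converges_unique (fun n => (Ms n)^* *' (p -' k0) *' Ms n)).
    + apply converges_sandwich, Hl.
    + apply converges_geometric. intro n.
      destruct (sqseq_inv n) as [_ [_ [Hkn [_ [HMM _]]]]].
      rewrite HMM. replace (p -' Ks n -' p) with (-' Ks n) by agroup.
      rewrite norm_opp. pose proof (half_pow_bounds n). lra.
Qed.
End SquareRoot.

Lemma isometry_perturbation {A : CStarAlg} (p Y E : A) : projection A p ->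
  Y^* *' Y = p -> E *' p = E -> norm E <= 1/16 ->
  exists m, in_corner p m /\ ((Y +' E) *' m)^* *' ((Y +' E) *' m) = p.
Proof.
  intros Pp HYY HEp HE. pose proof Pp as [Hpp Hps].
  assert (HYp : Y *' p = Y) by (apply pi_right; auto).
  pose proof (pi_norm p Y Pp HYY) as HY.
  set (k := p -' (Y +' E)^* *' (Y +' E)).
  assert (Hq : (Y +' E) *' p = Y +' E) by (rewrite mulDl, HYp, HEp; reflexivity).
  assert (Hks : k^* = k) by (unfold k; rewrite star_sub, starM, starK, Hps; reflexivity).
  assert (Hkc : in_corner p k).
  { split; unfold k.
    - rewrite mul_subr, Hpp, mulA, (star_fix_l _ p Pp Hq). reflexivity.
    - rewrite mul_subl, Hpp, <- mulA, Hq. reflexivity. }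
  assert (Hkn : norm k <= 1/4).
  { replace k with (-' (Y^* *' E +' E^* *' Y +' E^* *' E))
      by (unfold k; sexpand; mexpand; rewrite HYY; agroup).
    rewrite norm_opp.
    pose proof (normM (Y^*) E). pose proof (normM (E^*) Y). pose proof (normM (E^*) E).
    rewrite norm_star in *. pose proof (norm_ge0 E). pose proof (norm_ge0 Y).
    pose proof (norm_triangle (Y^* *' E +' E^* *' Y) (E^* *' E)).
    pose proof (norm_triangle (Y^* *' E) (E^* *' Y)).
    assert (norm Y * norm E <= 1/16) by nra. assert (norm E * norm Y <= 1/16) by nra.
    assert (norm E * norm E <= 1/16) by nra. lra. }
  destruct (corner_inverse_sqrt p k Pp Hks Hkc Hkn) as [m [Hmc Hm]].
  exists m. split; auto.
  replace (p -' k) with ((Y +' E)^* *' (Y +' E)) in Hm by (unfold k; agroup).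
  rewrite starM, <- Hm, !mulA. reflexivity.
Qed.

(* Along the segment W_t = (1-t) p + t z, z = r b p, we
   carry an element g of p A p with W_t g an isometry of p; at t = 1 the
   isometry z g has range below r. *)
Section Comparison.
Context {A : CStarAlg}.
Variables (p r a b : A).
Hypotheses (Pp : projection A p) (Pr : projection A r) (Hpr : p *' r = 0')
  (Hab : norm (p -' a *' r *' b) < 1/2).

Let z := r *' b *' p.
Let c := p *' a *' r.
Definition Wt (t : R) : A := (1 - t) .* p +' t .* z.
(* W_t is bounded below on p A by 1/K. *)
Let K := 2 * (1 + norm c).

(* Since c z = p (a r b) p is within 1/2 of p, the identity
   x = p W_t x + c W_t x + t (p - c z) x gives the lower bound. *)
Lemma Wt_lower_bound t x : 0 <= t <= 1 -> p *' x = x -> norm x <= K * norm (Wt t *' x).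
Proof.
  intros Ht Hx. destruct Pp as [Hpp Hps]. destruct Pr as [Hrr Hrs].
  assert (Hrp : r *' p = 0') by (apply proj_orth_sym; auto).
  pose proof (rel_assoc _ _ _ Hpr) as Hpr'. pose proof (rel_assoc _ _ _ Hrp) as Hrp'.
  pose proof (rel_assoc _ _ _ Hpp) as Hpp'. pose proof (rel_assoc _ _ _ Hx) as Hx'.
  pose proof (rel_assoc _ _ _ Hrr) as Hrr'.
  assert (E : x = p *' (Wt t *' x) +' c *' (Wt t *' x) +' t .* ((p -' c *' z) *' x)).
  { unfold Wt, c, z. mexpand. rewrite ?Hpr', ?Hrp', ?Hpp', ?Hx', ?Hrr', ?Hpr, ?Hrp, ?Hx, ?Hpp.
    rewrite ?mulr0, ?mul0r, ?smulc0, ?smul_smul. agroup. }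
  assert (Ecz : p -' c *' z = p *' (p -' a *' r *' b) *' p).
  { unfold c, z. mexpand. rewrite ?Hpp', ?Hrr', ?Hpp. reflexivity. }
  assert (Hpn : norm p <= 1) by (apply proj_norm; split; auto).
  assert (N1 : norm ((p -' c *' z) *' x) <= (1/2) * norm x).
  { rewrite Ecz. eapply Rle_trans. apply normM. apply Rmult_le_compat_r. apply norm_ge0.
    eapply Rle_trans. apply norm3. pose proof (norm_ge0 p).
    pose proof (norm_ge0 (p -' a *' r *' b)).
    assert (norm p * norm (p -' a *' r *' b) <= 1 * (1/2)) by (apply Rmult_le_compat; lra).
    nra. }
  pose proof (normM p (Wt t *' x)). pose proof (normM c (Wt t *' x)).
  pose proof (norm_ge0 (Wt t *' x)). pose proof (norm_ge0 c). pose proof (norm_ge0 x).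
  assert (N2 : norm x <= norm p * norm (Wt t *' x) + norm c * norm (Wt t *' x)
                         + t * ((1/2) * norm x)).
  { rewrite E at 1. eapply Rle_trans. apply norm_triangle.
    rewrite norm_smul, Rabs_pos_eq by lra.
    pose proof (norm_triangle (p *' (Wt t *' x)) (c *' (Wt t *' x))).
    assert (t * norm ((p -' c *' z) *' x) <= t * ((1/2) * norm x))
      by (apply Rmult_le_compat_l; lra).
    lra. }
  assert (norm p * norm (Wt t *' x) <= 1 * norm (Wt t *' x))
    by (apply Rmult_le_compat_r; lra).
  unfold K. nra.
Qed.

Definition liftable (t : R) : Prop :=
  exists g, in_corner p g /\ (Wt t *' g)^* *' (Wt t *' g) = p.

Lemma liftable_step t d : 0 <= t <= 1 -> 0 <= d -> d * (norm (z -' p) * K) <= 1/16 ->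
  liftable t -> liftable (t + d).
Proof.
  intros Ht Hd Hsmall [g [[Hpg Hgp] Hg]].
  set (Y := Wt t *' g). set (E := d .* ((z -' p) *' g)).
  assert (Hgn : norm g <= K).
  { pose proof (Wt_lower_bound t g Ht Hpg) as Hlow. pose proof (pi_norm p Y Pp Hg) as HY.
    fold Y in Hlow. assert (0 <= K) by (unfold K; pose proof (norm_ge0 c); lra). nra. }
  assert (HE : norm E <= 1/16).
  { unfold E. rewrite norm_smul, Rabs_pos_eq by lra.
    pose proof (normM (z -' p) g). pose proof (norm_ge0 (z -' p)).
    pose proof (norm_ge0 g).
    assert (norm (z -' p) * norm g <= norm (z -' p) * K) by (apply Rmult_le_compat_l; lra).
    nra. }
  assert (HEp : E *' p = E) by (unfold E; rewrite mul_smull, <- mulA, Hgp; reflexivity).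
  destruct (isometry_perturbation p Y E Pp Hg HEp HE) as [m [[Hpm Hmp] Hm]].
  exists (g *' m). split; [split|].
  - rewrite mulA, Hpg. reflexivity.
  - rewrite <- mulA, Hmp. reflexivity.
  - replace (Wt (t + d) *' (g *' m)) with ((Y +' E) *' m); [exact Hm|].
    unfold Y, E, Wt. mexpand. agroup.
Qed.

Lemma liftable_0 : liftable 0.
Proof.
  destruct Pp as [Hpp Hps]. exists p. split; [split; auto|].
  unfold Wt. rewrite smul_0, add0r, Rminus_0_r, smul_1, starM, Hps, !Hpp. reflexivity.
Qed.

(* With N steps of size 1/N, N large, the whole segment is traversed. *)
Lemma liftable_1 : liftable 1.
Proof.
  destruct (INR_unbounded (16 * (norm (z -' p) * K))) as [N0 HN0].
  set (N := S N0). assert (HN : 0 < INR N) by (apply lt_0_INR; unfold N; lia).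
  assert (HNb : 16 * (norm (z -' p) * K) <= INR N) by (unfold N; rewrite S_INR; lra).
  assert (Hj : forall j, (j <= N)%nat -> liftable (INR j / INR N)).
  { induction j as [|j IH]; intro Hj.
    - replace (INR 0 / INR N) with 0 by (change (INR 0) with 0; unfold Rdiv; ring).
      exact liftable_0.
    - replace (INR (S j) / INR N) with (INR j / INR N + 1 / INR N)
        by (rewrite S_INR; field; lra).
      assert (Hjn : INR j <= INR N) by (apply le_INR; lia).
      apply liftable_step; [split| | |apply IH; lia].
      + unfold Rdiv. apply Rmult_le_pos; [apply pos_INR|]. apply Rlt_le, Rinv_0_lt_compat, HN.
      + apply (Rmult_le_reg_r (INR N)); auto. unfold Rdiv.
        rewrite Rmult_assoc, Rinv_l, Rmult_1_r by lra. lra.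
      + apply Rlt_le, Rdiv_lt_0_compat; lra.
      + apply (Rmult_le_reg_l (INR N)); auto. unfold Rdiv.
        rewrite Rmult_1_l, <- Rmult_assoc, Rinv_r by lra. lra. }
  specialize (Hj N (le_n N)). replace (INR N / INR N) with 1 in Hj by (field; lra). exact Hj.
Qed.

Lemma comparison : exists w, w^* *' w = p /\ r *' w = w.
Proof.
  destruct liftable_1 as [g [_ Hg]]. exists (Wt 1 *' g). split; auto.
  unfold Wt. rewrite Rminus_diag, smul_0, add0, smul_1. unfold z.
  rewrite !mulA, (proj1 Pr). reflexivity.
Qed.
End Comparison.

Lemma subequivalent_full {A : CStarAlg} (p r : A) : projection A p ->
  properly_infinite A r -> full A r -> p *' r = 0' -> exists w, w^* *' w = p /\ r *' w = w.
Proof.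
  intros Pp Hr Hf Hpr. destruct (full_approx A r Hr p Hf (1/2)) as [a [b Hab]]; [lra|].
  exact (comparison p r a b Pp (proj1 Hr) Hpr Hab).
Qed.

Section Paths.
Context {A : CStarAlg}.

Definition path_continuous_at (P : R -> A) (t0 : R) : Prop :=
  forall eps, 0 < eps -> exists delta, 0 < delta /\
    forall t, 0 <= t <= 1 -> Rabs (t - t0) < delta -> norm (P t -' P t0) < eps.

Lemma cont_eps (f : R -> R) t0 : continuity_pt f t0 -> forall eps, 0 < eps ->
  exists d, 0 < d /\ forall t, Rabs (t - t0) < d -> Rabs (f t - f t0) < eps.
Proof.
  intros H eps He. destruct (H eps He) as [d [Hd Hf]]. exists d. split; auto.
  intros t Ht. destruct (Req_dec t0 t) as [E|E].
  - subst. rewrite Rminus_diag, Rabs_R0. exact He.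
  - apply (Hf t). split; [split; [exact I|exact E]|exact Ht].
Qed.

Lemma lincomb_continuous (f g h : R -> R) (x y z : A) t0 :
  continuity_pt f t0 -> continuity_pt g t0 -> continuity_pt h t0 ->
  path_continuous_at (fun t => f t .* x +' g t .* y +' h t .* z) t0.
Proof.
  intros Cf Cg Ch eps He.
  set (K := norm x + norm y + norm z + 1).
  pose proof (norm_ge0 x) as Hx. pose proof (norm_ge0 y) as Hy. pose proof (norm_ge0 z) as Hz.
  assert (HK : 0 < K) by (unfold K; lra).
  assert (He' : 0 < eps / (3 * K)) by (apply Rdiv_lt_0_compat; lra).
  destruct (cont_eps f t0 Cf _ He') as [d1 [Hd1 Hf]].
  destruct (cont_eps g t0 Cg _ He') as [d2 [Hd2 Hg]].
  destruct (cont_eps h t0 Ch _ He') as [d3 [Hd3 Hh]].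
  exists (Rmin d1 (Rmin d2 d3)). split; [repeat apply Rmin_glb_lt; auto|].
  intros t _ Ht.
  pose proof (Rmin_l d1 (Rmin d2 d3)). pose proof (Rmin_r d1 (Rmin d2 d3)).
  pose proof (Rmin_l d2 d3). pose proof (Rmin_r d2 d3).
  specialize (Hf t ltac:(lra)). specialize (Hg t ltac:(lra)). specialize (Hh t ltac:(lra)).
  match goal with |- norm (?L -' ?R) < _ =>
    replace (L -' R) with ((f t - f t0) .* x +' (g t - g t0) .* y +' (h t - h t0) .* z)
      by agroup end.
  eapply Rle_lt_trans; [apply norm_triangle|].
  eapply Rle_lt_trans; [apply Rplus_le_compat_r, norm_triangle|].
  rewrite !norm_smul.
  assert (B : forall a n, Rabs a < eps / (3 * K) -> 0 <= n <= K -> Rabs a * n < eps / 3).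
  { intros a n Ha Hn. replace (eps / 3) with (eps / (3 * K) * K) by (field; lra).
    apply Rle_lt_trans with (Rabs a * K).
    - apply Rmult_le_compat_l; [apply Rabs_pos|lra].
    - apply Rmult_lt_compat_r; lra. }
  pose proof (B _ (norm x) Hf ltac:(unfold K; lra)).
  pose proof (B _ (norm y) Hg ltac:(unfold K; lra)).
  pose proof (B _ (norm z) Hh ltac:(unfold K; lra)).
  lra.
Qed.

Definition glue (P1 P2 : R -> A) (t : R) : A :=
  if Rle_dec t (1/2) then P1 (2 * t) else P2 (2 * t - 1).

Lemma glue_continuous P1 P2 t0 : 0 <= t0 <= 1 -> P1 1 = P2 0 ->
  (forall t, 0 <= t <= 1 -> path_continuous_at P1 t) ->
  (forall t, 0 <= t <= 1 -> path_continuous_at P2 t) ->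
  path_continuous_at (glue P1 P2) t0.
Proof.
  intros Ht0 Hmid C1 C2 eps He. unfold glue.
  destruct (Rtotal_order t0 (1/2)) as [Hlt|[Heq|Hgt]].
  - destruct (C1 (2 * t0) ltac:(lra) eps He) as [d [Hd Hc]].
    exists (Rmin (d/2) (1/2 - t0)). split; [apply Rmin_glb_lt; lra|].
    intros t Ht Htd. pose proof (Rmin_l (d/2) (1/2 - t0)).
    pose proof (Rmin_r (d/2) (1/2 - t0)). pose proof (Rabs_def2 _ _ Htd).
    destruct (Rle_dec t (1/2)); [|lra]. destruct (Rle_dec t0 (1/2)); [|lra].
    apply Hc; [lra|]. rewrite <- Rmult_minus_distr_l, Rabs_mult, Rabs_pos_eq by lra.
    lra.
  - subst t0. destruct (C1 1 ltac:(lra) eps He) as [d1 [Hd1 Hc1]].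
    destruct (C2 0 ltac:(lra) eps He) as [d2 [Hd2 Hc2]].
    exists (Rmin (d1/2) (d2/2)). split; [apply Rmin_glb_lt; lra|].
    intros t Ht Htd. pose proof (Rmin_l (d1/2) (d2/2)). pose proof (Rmin_r (d1/2) (d2/2)).
    apply Rabs_def2 in Htd.
    destruct (Rle_dec (1/2) (1/2)) as [_|]; [|lra]. replace (2 * (1/2)) with 1 by field.
    destruct (Rle_dec t (1/2)).
    + apply Hc1; [lra|]. rewrite Rabs_left1 by lra. lra.
    + rewrite Hmid. apply Hc2; [lra|]. rewrite Rabs_pos_eq by lra. lra.
  - destruct (C2 (2 * t0 - 1) ltac:(lra) eps He) as [d [Hd Hc]].
    exists (Rmin (d/2) (t0 - 1/2)). split; [apply Rmin_glb_lt; lra|].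
    intros t Ht Htd. pose proof (Rmin_l (d/2) (t0 - 1/2)).
    pose proof (Rmin_r (d/2) (t0 - 1/2)). pose proof (Rabs_def2 _ _ Htd).
    destruct (Rle_dec t (1/2)); [lra|]. destruct (Rle_dec t0 (1/2)); [lra|].
    apply Hc; [lra|]. replace (2 * t - 1 - (2 * t0 - 1)) with (2 * (t - t0)) by ring.
    rewrite Rabs_mult, Rabs_pos_eq by lra. lra.
Qed.

Lemma homotopic_trans p e q : homotopic_proj A p e -> homotopic_proj A e q ->
  homotopic_proj A p q.
Proof.
  intros [P1 [Pr1 [P10 [P11 Pc1]]]] [P2 [Pr2 [P20 [P21 Pc2]]]].
  exists (glue P1 P2). split; [|split; [|split]].
  - intros t Ht. unfold glue. destruct (Rle_dec t (1/2)); [apply Pr1|apply Pr2]; lra.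
  - unfold glue. destruct (Rle_dec 0 (1/2)); [|lra]. rewrite Rmult_0_r. exact P10.
  - unfold glue. destruct (Rle_dec 1 (1/2)); [lra|].
    replace (2 * 1 - 1) with 1 by ring. exact P21.
  - intros t Ht. apply glue_continuous; auto. rewrite P11, P20. reflexivity.
Qed.
End Paths.

Section Rotation.
Context {A : CStarAlg}.
Variables (P E s : A).
Hypotheses (PP : projection A P) (PE : projection A E) (HPE : P *' E = 0')
  (Hs1 : s^* *' s = P) (Hs2 : s *' s^* = E).

Definition rotation (t : R) : A :=
  (1 - t) .* P +' sqrt (t * (1 - t)) .* (s +' s^*) +' t .* E.

Lemma rotation_relations : s *' P = s /\ E *' s = s /\ s^* *' E = s^* /\ P *' s^* = s^* /\
  P *' s = 0' /\ E *' P = 0' /\ s *' s = 0' /\ s^* *' s^* = 0' /\ s *' E = 0' /\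
  E *' s^* = 0' /\ s^* *' P = 0'.
Proof.
  assert (A1 : s *' P = s) by (apply pi_right; auto).
  assert (A2 : E *' s = s) by (apply pi_left; auto).
  assert (A5 : P *' s = 0') by (rewrite <- A2, mulA, HPE, mul0r; reflexivity).
  assert (A7 : s *' s = 0') by (rewrite <- A1 at 1; rewrite <- mulA, A5, mulr0; reflexivity).
  assert (A9 : s *' E = 0') by (rewrite <- A1, <- mulA, HPE, mulr0; reflexivity).
  repeat split; auto.
  - apply star_fix_r; auto.
  - apply star_fix_l; auto.
  - apply proj_orth_sym; auto.
  - rewrite <- starM, A7. apply star0.
  - rewrite <- (proj2 PE). apply star_zero, A9.
  - rewrite <- (proj2 PP). apply star_zero, A5.
Qed.

Lemma rotation_proj t : 0 <= t <= 1 -> projection A (rotation t).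
Proof.
  intro Ht. destruct rotation_relations as [A1 [A2 [A3 [A4 [A5 [A6 [A7 [A8 [A9 [A10 A11]]]]]]]]]].
  destruct PP as [Hpp Hps]. destruct PE as [Hee Hes].
  assert (Hb : sqrt (t * (1 - t)) * sqrt (t * (1 - t)) = t * (1 - t))
    by (apply sqrt_sqrt; nra).
  set (b := sqrt (t * (1 - t))) in *.
  split; unfold rotation; fold b.
  - mexpand.
    rewrite ?A1, ?A2, ?A3, ?A4, ?A5, ?A6, ?A7, ?A8, ?A9, ?A10, ?A11, ?Hs1, ?Hs2, ?HPE,
      ?Hpp, ?Hee, ?smulc0, ?smul_smul.
    agroup_with nra.
  - sexpand. rewrite Hps, Hes. agroup.
Qed.

Lemma rotation_homotopic : homotopic_proj A P E.
Proof.
  exists rotation. split; [|split; [|split]].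
  - exact rotation_proj.
  - unfold rotation. rewrite Rmult_0_l, sqrt_0, Rminus_0_r, !smul_0, smul_1, !add0r.
    reflexivity.
  - unfold rotation. rewrite Rminus_diag, Rmult_0_r, sqrt_0, !smul_0, smul_1, !add0.
    reflexivity.
  - intros t0 Ht0. apply (lincomb_continuous (fun t => 1 - t) (fun t => sqrt (t * (1 - t)))
      (fun t => t)); [reg|..|reg].
    apply (continuity_pt_comp (fun t => t * (1 - t)) sqrt); [reg|].
    apply continuity_pt_sqrt. nra.
Qed.
End Rotation.

Section RangeProjection.
Context {A : CStarAlg}.
Implicit Types p r v w x : A.

Lemma range_projection p w : projection A p -> w^* *' w = p -> projection A (w *' w^*).
Proof.
  intros Pp Hw. assert (Hwp : w *' p = w) by (apply pi_right; auto). split.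
  - rewrite <- mulA, (mulA (w^*)), Hw, mulA, Hwp. reflexivity.
  - rewrite starM, starK. reflexivity.
Qed.

Lemma range_orth x r w : x *' r = 0' -> r *' w = w -> x *' (w *' w^*) = 0'.
Proof. intros Hx Hw. rewrite <- Hw, !mulA, Hx, !mul0r. reflexivity. Qed.

Lemma transfer_isometry p w v : projection A p -> w^* *' w = p -> v^* *' v = p ->
  (v *' w^*)^* *' (v *' w^*) = w *' w^* /\ (v *' w^*) *' (v *' w^*)^* = v *' v^*.
Proof.
  intros Pp Hw Hv.
  assert (Hwp : w *' p = w) by (apply pi_right; auto).
  assert (Hvp : v *' p = v) by (apply pi_right; auto).
  rewrite starM, starK. split.
  - rewrite <- mulA, (mulA (v^*)), Hv, mulA, Hwp. reflexivity.
  - rewrite <- mulA, (mulA (w^*)), Hw, mulA, Hvp. reflexivity.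
Qed.
End RangeProjection.

(* Rotate p onto a copy e = w w^* of p below r, then rotate e onto q. *)
Theorem proposition2p5 (A : CStarAlg) (p q r : A) :
  properly_infinite A p -> full A p ->
  properly_infinite A q -> full A q ->
  mvn A p q ->
  properly_infinite A r -> full A r ->
  mul p r = zero -> mul q r = zero ->
  homotopic_proj A p q.
Proof.
  intros [Pp _] _ [Pq _] _ [v [Hv1 Hv2]] Hr Hfr Hpr Hqr.
  destruct (subequivalent_full p r Pp Hr Hfr Hpr) as [w [Hw1 Hw2]].
  pose proof (range_projection p w Pp Hw1) as Pe.
  destruct (transfer_isometry p w v Pp Hw1 Hv1) as [Hs1 Hs2]. rewrite Hv2 in Hs2.
  apply homotopic_trans with (w *' w^*).
  - apply (rotation_homotopic p _ w); auto. apply (range_orth p r); auto.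
  - apply (rotation_homotopic _ q (v *' w^*)); auto.
    apply proj_orth_sym; auto. apply (range_orth q r); auto.
Qed.
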